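(* Let $k\ge2$ be even, $\alpha_1,\dots,\alpha_k$ positive integers and $G=C(\alpha_1,\dots,\alpha_k)$. Then all $k$ eigenvalues of the quotient matrix $Q_L$ are simple (pairwise distinct).
   Context: $C(\alpha_1,\dots,\alpha_k)$ is defined recursively by $C(\alpha_1)=\overline{K_{\alpha_1}}$ and $C(\alpha_1,\dots,\alpha_i)=\overline{C(\alpha_1,\dots,\alpha_{i-1})\cup K_{\alpha_i}}$ (disjoint union, then complement). $\pi_i$ is the set of $\alpha_i$ vertices introduced at step $i$; for $k$ even, $\pi_i$ is a clique for $i$ odd, independent for $i$ even, and for $i<j$ vertices of $\pi_i,\pi_j$ are adjacent iff $j$ is even. $L=D-A$ is the Laplacian and $Q_L$ the $k\times k$ matrix with $(Q_L)_{ij}=\sum_{v\in\pi_j}L_{uv}$ for any $u\in\pi_i$. *)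

From mathcomp Require Import all_boot all_order all_algebra all_field.
Set Implicit Arguments. Unset Strict Implicit. Unset Printing Implicit Defensive.
Import GRing.Theory Num.Theory.
Local Open Scope ring_scope.

(* Vertices of C(alpha_1,...,alpha_k): pairs (i, t) with i : 'I_k the (0-based)
   class index (paper's pi_{i+1}) and t : 'I_(alpha i). *)
Definition cvert (k : nat) (alpha : 'I_k -> nat) : finType :=
  {i : 'I_k & 'I_(alpha i)}.

(* Adjacency for k even (paper, 1-based): pi_i clique for i odd, independent
   for i even; for i < j, pi_i and pi_j adjacent iff j even.
   0-based: class i clique iff i even; for i < j adjacent iff j odd. *)
Definition cadj (k : nat) (alpha : 'I_k -> nat) (u v : cvert alpha) : bool :=
  (u != v) &&
  (if tag u == tag v then ~~ odd (tag u)
   else odd (maxn (tag u) (tag v))).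

Definition cdeg (k : nat) (alpha : 'I_k -> nat) (u : cvert alpha) : nat :=
  #|[set v | cadj u v]|.

Definition claplacian (k : nat) (alpha : 'I_k -> nat)
    (u v : cvert alpha) : algC :=
  (if u == v then (cdeg u)%:R else 0) - (if cadj u v then 1 else 0).

Definition QL (k : nat) (alpha : 'I_k -> nat) : 'M[algC]_k :=
  \matrix_(i < k, j < k)
    match [pick u : cvert alpha | tag u == i] with
    | Some u => \sum_(v : cvert alpha | tag v == j) claplacian u v
    | None => 0
    end.

From mathcomp Require Import all_boot all_order all_algebra all_field.
From mathcomp Require Import ring.
Import GRing.Theory Num.Theory.
Local Open Scope ring_scope.

(* Index the classes 0,...,k-1.  A vertex of class i has
   w_ij = [max(i,j) odd] * alpha_j neighbours in any other class j, so Q_L is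
   the weighted Laplacian (Q_L x)_i = sum_j w_ij (x_i - x_j).  We write down
   k explicit eigenvectors: the constant vector (eigenvalue 0), and for p > 0
   the vector equal to alpha_p below p, to -(alpha_0 + ... + alpha_(p-1)) at p
   and to 0 above p.  Its eigenvalue is the total size of a set S_p of classes
   ({j <= p} u {odd j} for p odd, {odd j > p} for p even, S_0 empty;
   spec_set p below).  Since k is even, these sets form a chain under strict
   inclusion, so the eigenvalues are pairwise distinct integers; a monic
   polynomial of degree k with k distinct roots is the product of the
   corresponding linear factors. *)

Set Implicit Arguments. Unset Strict Implicit. Unset Printing Implicit Defensive.

Section CharPoly.
Variables (F : fieldType) (n : nat).

Lemma char_poly_trmx (M : 'M[F]_n) : char_poly M^T = char_poly M.
Proof.
by rewrite /char_poly /char_poly_mx -det_tr raddfB /= tr_scalar_mx map_trmx trmxK.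
Qed.

(* An eigenvalue for a nonzero column eigenvector is a root of the
   characteristic polynomial (the library speaks of row eigenvectors). *)
Lemma col_eigen_root (M : 'M[F]_n) (x : 'cV[F]_n) (l : F) :
  x != 0 -> M *m x = l *: x -> root (char_poly M) l.
Proof.
move=> x_neq0 Mx; rewrite -char_poly_trmx -eigenvalue_root_char.
apply/eigenvalueP; exists x^T; last by rewrite trmx_eq0.
by rewrite -trmx_mul Mx linearZ.
Qed.

Lemma char_poly_distinct_roots (M : 'M[F]_n) (lam : 'I_n -> F) :
  injective lam -> (forall i, root (char_poly M) (lam i)) ->
  char_poly M = \prod_(i < n) ('X - (lam i)%:P).
Proof.
move=> lam_inj lam_root.
rewrite (@all_roots_prod_XsubC _ (char_poly M) (map lam (enum 'I_n))).
- by rewrite (monicP (char_poly_monic _)) scale1r big_map big_enum.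
- by rewrite size_char_poly size_map size_enum_ord.
- by apply/allP => z /mapP [i _ ->].
- by rewrite uniq_rootsE map_inj_uniq ?enum_uniq.
Qed.

End CharPoly.

Lemma sum_proper_ltn (T : finType) (A B : {set T}) (f : T -> nat) :
  (forall x, 0 < f x)%N -> A \proper B ->
  (\sum_(x in A) f x < \sum_(x in B) f x)%N.
Proof.
move=> f_pos /properP[/setIidPr sAB [x xB xA]].
rewrite [in X in (_ < X)%N](big_setID A) /= sAB -[X in (X < _)%N]addn0 ltn_add2l.
by rewrite (bigD1 x) ?inE ?xA ?xB //= ltn_addr.
Qed.

Lemma sum_split_at (R : nmodType) (k : nat) (p : 'I_k) (F : 'I_k -> R) :
  \sum_j F j = \sum_(j : 'I_k | (j < p)%N) F j + F p
               + \sum_(j : 'I_k | (p < j)%N) F j.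
Proof.
rewrite (bigD1 p) //= (bigID (fun j : 'I_k => (j < p)%N)) /= addrCA addrA.
congr (_ + _ + _); apply: eq_bigl => j; rewrite -(inj_eq val_inj) /=.
  by case: ltngtP.
by rewrite andbC; case: ltngtP.
Qed.

Section QuotientMatrix.
Variables (k : nat) (alpha : 'I_k -> nat).

Lemma class_size (j : 'I_k) :
  \sum_(v : cvert alpha | tag v == j) (1 : algC) = (alpha j)%:R.
Proof.
have := @sig_big_dep algC 0 +%R 'I_k (fun i => 'I_(alpha i)) (pred1 j)
  (fun _ _ => true) (fun _ _ => 1).
rewrite big_pred1_eq sumr_const card_ord => ->.
by apply: eq_bigl => v; rewrite andbT.
Qed.

(* Number of neighbours that a vertex of class i has in another class j. *)
Definition qweight (i j : 'I_k) : algC := (odd (maxn i j))%:R * (alpha j)%:R.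

Definition class_nbrs (u : cvert alpha) (j : 'I_k) : algC :=
  \sum_(v : cvert alpha | tag v == j) (cadj u v)%:R.

Lemma cdeg_classes (u : cvert alpha) : (cdeg u)%:R = \sum_j class_nbrs u j.
Proof.
rewrite /cdeg -sum1_card natr_sum big_mkcond /=.
rewrite (partition_big (fun v : cvert alpha => tag v) xpredT) //=.
by apply: eq_bigr => j _; apply: eq_bigr => v _; rewrite inE; case: cadj.
Qed.

(* Adjacency between distinct classes depends only on the classes. *)
Lemma class_nbrs_other (u : cvert alpha) (j : 'I_k) :
  tag u != j -> class_nbrs u j = qweight (tag u) j.
Proof.
move=> uj; rewrite /qweight -class_size mulr_sumr; apply: eq_bigr => v /eqP vj.
have uv : u != v by apply: contraNneq uj => ->; rewrite vj.
by rewrite /cadj uv vj (negbTE uj) mulr1.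
Qed.

Lemma class_sum_laplacian (u : cvert alpha) (j : 'I_k) :
  \sum_(v : cvert alpha | tag v == j) claplacian u v
  = (tag u == j)%:R * (cdeg u)%:R - class_nbrs u j.
Proof.
rewrite /claplacian sumrB; congr (_ - _); last first.
  by apply: eq_bigr => v _; case: cadj.
have [<-|uj] := eqVneq (tag u) j.
  rewrite (bigD1 u) //= eqxx mul1r big1 ?addr0 // => v /andP[_ vu].
  by rewrite eq_sym (negbTE vu).
rewrite mul0r big1 // => v /eqP vj; case: eqP => // uv.
by rewrite uv vj eqxx in uj.
Qed.

Lemma QL_entry (i j : 'I_k) : (0 < alpha i)%N ->
  QL alpha i j = (i == j)%:R * \sum_l qweight i l - qweight i j.
Proof.
move=> alpha_i; rewrite mxE; case: pickP => [u /eqP ui | no_u]; last first.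
  have := no_u (Tagged (fun i => 'I_(alpha i)) (Ordinal alpha_i)).
  by rewrite eqxx.
rewrite class_sum_laplacian ui; have [<-|ij] := eqVneq i j; last first.
  by rewrite !mul0r !sub0r class_nbrs_other ?ui.
rewrite !mul1r cdeg_classes (bigD1 i) //= [in RHS](bigD1 i) //=.
rewrite addrAC subrr add0r [RHS]addrAC subrr add0r.
by apply: eq_bigr => l li; rewrite class_nbrs_other ?ui // eq_sym.
Qed.

Hypothesis alpha_pos : forall i, (0 < alpha i)%N.

Lemma QL_mulmx (x : 'cV[algC]_k) (i : 'I_k) :
  (QL alpha *m x) i 0 = \sum_j qweight i j * (x i 0 - x j 0).
Proof.
have select_i (y : 'I_k -> algC) : \sum_j (i == j)%:R * y j = y i.
  rewrite (bigD1 i) //= eqxx mul1r big1 ?addr0 // => j ji.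
  by rewrite eq_sym (negbTE ji) mul0r.
rewrite mxE; under eq_bigr do rewrite QL_entry // mulrBl -mulrA.
rewrite sumrB select_i mulr_suml -sumrB.
by apply: eq_bigr => j _; rewrite mulrBr.
Qed.

End QuotientMatrix.

Section Eigenvectors.
Variables (k : nat) (alpha : 'I_k -> nat).

Definition below (p : 'I_k) : algC := \sum_(j : 'I_k | (j < p)%N) (alpha j)%:R.

Definition odd_above (p : 'I_k) : algC :=
  \sum_(j : 'I_k | (p < j)%N) (odd j)%:R * (alpha j)%:R.

Definition step_vec (p j : 'I_k) : algC :=
  if (j < p)%N then (alpha p)%:R else if j == p then - below p else 0.

Definition step_val (p : 'I_k) : algC :=
  (odd p)%:R * (below p + (alpha p)%:R) + odd_above p.

Lemma step_vec_eigen (p i : 'I_k) :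
  \sum_j qweight alpha i j * (step_vec p i - step_vec p j)
  = step_val p * step_vec p i.
Proof.
have x_p : step_vec p p = - below p by rewrite /step_vec ltnn eqxx.
have x_lt (j : 'I_k) : (j < p)%N -> step_vec p j = (alpha p)%:R.
  by rewrite /step_vec => ->.
have x_gt (j : 'I_k) : (p < j)%N -> step_vec p j = 0.
  by move=> pj; rewrite /step_vec ltnNge ltnW //= -(inj_eq val_inj) gtn_eqF.
have w_lt (a b : 'I_k) :
    (a < b)%N -> qweight alpha a b = (odd b)%:R * (alpha b)%:R.
  by move=> ab; rewrite /qweight (maxn_idPr (ltnW ab)).
have w_gt (a b : 'I_k) :
    (b < a)%N -> qweight alpha a b = (odd a)%:R * (alpha b)%:R.
  by move=> ba; rewrite /qweight (maxn_idPl (ltnW ba)).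
rewrite (sum_split_at p) /step_val.
case: (ltngtP i p) => ip.
- rewrite big1 ?add0r => [|j jp]; last by rewrite !x_lt ?subrr ?mulr0.
  under [X in _ + X]eq_bigr => j pj do
    rewrite x_lt // x_gt // subr0 w_lt ?(ltn_trans ip) // mulrC.
  by rewrite -mulr_sumr x_lt // x_p w_lt // /below /odd_above; ring.
- rewrite [X in _ + X]big1 ?addr0 => [|j pj]; last by rewrite !x_gt ?subrr ?mulr0.
  under eq_bigr => j jp do
    rewrite x_gt // x_lt // w_gt ?(ltn_trans jp) // -mulrA mulrC.
  by rewrite -!mulr_suml x_gt // x_p w_gt // /below; ring.
- have -> : i = p by apply: val_inj.
  under eq_bigr => j jp do rewrite (x_lt j jp) (w_gt _ _ jp) -mulrA mulrC.
  under [X in _ + X]eq_bigr => j pj do rewrite (x_gt j pj) (w_lt _ _ pj) mulrC.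
  by rewrite subrr mulr0 addr0 -!mulr_suml -mulr_sumr x_p /below /odd_above; ring.
Qed.

Definition spec_set (p : 'I_k) : {set 'I_k} :=
  if val p == 0%N then set0
  else if odd p then [set j : 'I_k | (j <= p)%N || odd j]
  else [set j : 'I_k | (p < j)%N && odd j].

Definition eigval (p : 'I_k) : nat := \sum_(j in spec_set p) alpha j.

Lemma eigval_step (p : 'I_k) : val p != 0%N -> (eigval p)%:R = step_val p.
Proof.
move=> p_neq0; rewrite /eigval /spec_set (negbTE p_neq0) natr_sum big_mkcond.
rewrite (sum_split_at p) /step_val /below /odd_above.
have odd_ind (j : 'I_k) : (if odd j then (alpha j)%:R else 0 : algC)
                          = (odd j)%:R * (alpha j)%:R.
  by case: odd; rewrite ?mul1r ?mul0r.
case: (boolP (odd p)) => p_odd /=.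
- rewrite inE leqnn; under eq_bigr => j jp do rewrite inE (ltnW jp).
  under [X in _ + X]eq_bigr => j pj do rewrite inE leqNgt pj /= odd_ind.
  by rewrite mul1r.
- rewrite inE ltnn big1 => [|j jp]; last by rewrite inE ltnNge (ltnW jp).
  under eq_bigr => j pj do rewrite inE pj /= odd_ind.
  by rewrite mul0r /= !add0r.
Qed.

(* For p = 0 the constant vector (zero row sums); otherwise step_vec p. *)
Definition eigvec (p : 'I_k) : 'cV[algC]_k :=
  \col_j (if val p == 0%N then 1 else step_vec p j).

Hypothesis alpha_pos : forall i, (0 < alpha i)%N.

Lemma QL_eigvec (p : 'I_k) : QL alpha *m eigvec p = (eigval p)%:R *: eigvec p.
Proof.
apply/colP => i; rewrite QL_mulmx // !mxE; under eq_bigr do rewrite !mxE.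
have [p0|p_neq0] := eqVneq (val p) 0%N.
  rewrite /eigval /spec_set p0 big_set0 mul0r big1 // => j _.
  by rewrite subrr mulr0.
by rewrite eigval_step // step_vec_eigen.
Qed.

(* Its entry at class 0 is 1 or alpha_p, never 0. *)
Lemma eigvec_neq0 (p : 'I_k) : eigvec p != 0.
Proof.
have k_gt0 : (0 < k)%N by apply: leq_ltn_trans (ltn_ord p).
apply/negP => /eqP/colP/(_ (Ordinal k_gt0)); rewrite !mxE /step_vec /=.
have [_|p_neq0] := eqVneq (val p) 0%N; first exact/eqP/oner_neq0.
by rewrite lt0n p_neq0; apply/eqP; rewrite pnatr_eq0 -lt0n.
Qed.

End Eigenvectors.

Section Distinctness.
Variables (k : nat) (alpha : 'I_k -> nat).
Hypotheses (k_even : ~~ odd k) (alpha_pos : forall i, (0 < alpha i)%N).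

(* Any two of the sets spec_set p are strictly nested; in fact they form the
   chain S_0 < S_(k-2) < ... < S_2 < S_1 < S_3 < ... < S_(k-1).  Evenness of
   k provides the odd class q + 1 after an even class q. *)
Lemma spec_set_comparable (p q : 'I_k) : (p < q)%N ->
  spec_set p \proper spec_set q \/ spec_set q \proper spec_set p.
Proof.
move=> pq.
have proper_by (A B : {set 'I_k}) (j0 : 'I_k) :
    j0 \in B -> j0 \notin A -> {subset A <= B} -> A \proper B.
  by move=> j0B j0A sAB; apply/properP; split; [apply/subsetP | exists j0].
have k_gt0 : (0 < k)%N by apply: leq_ltn_trans (ltn_ord q).
have p1_lt_k : (p.+1 < k)%N by apply: leq_ltn_trans (ltn_ord q).
pose o0 := Ordinal k_gt0; pose p1 := Ordinal p1_lt_k.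
have q_neq0 : (val q == 0%N) = false.
  by apply/negbTE; rewrite -lt0n (leq_ltn_trans _ pq).
rewrite /spec_set q_neq0; case: ifP => [_ | p_neq0]; last first.
  case: (boolP (odd p)) => p_odd; case: (boolP (odd q)) => q_odd.
  - left; apply: (proper_by _ _ p1).
    + by rewrite inE pq.
    + by rewrite inE ltnn /= p_odd.
    move=> j; rewrite !inE => /orP[jp | ->]; last by rewrite orbT.
    by rewrite (leq_trans jp (ltnW pq)).
  - right; apply: (proper_by _ _ o0).
    + by rewrite inE.
    + by rewrite inE.
    by move=> j; rewrite !inE => /andP[_ ->]; rewrite orbT.
  - left; apply: (proper_by _ _ o0).
    + by rewrite inE.
    + by rewrite inE.
    by move=> j; rewrite !inE => /andP[_ ->]; rewrite orbT.
  - right; apply: (proper_by _ _ p1).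
    + by rewrite inE /= ltnSn p_odd.
    + by rewrite inE /= ltnNge pq.
    by move=> j; rewrite !inE => /andP[/(ltn_trans pq) -> ->].
left; case: (boolP (odd q)) => q_odd.
  by apply: (proper_by _ _ o0) => [||j]; rewrite inE.
have q1_lt_k : (q.+1 < k)%N.
  rewrite ltn_neqAle ltn_ord andbT; apply: contra k_even => /eqP <-.
  by rewrite /= q_odd.
by apply: (proper_by _ _ (Ordinal q1_lt_k)) => [||j]; rewrite inE //= ltnSn.
Qed.

Lemma eigval_inj : injective (eigval alpha).
Proof.
suff neq (p q : 'I_k) : (p < q)%N -> eigval alpha p != eigval alpha q.
  move=> p q eq_pq; apply: val_inj; case: (ltngtP p q) => // [pq | qp].
  - by move: (neq p q pq); rewrite eq_pq eqxx.
  - by move: (neq q p qp); rewrite eq_pq eqxx.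
move=> /spec_set_comparable[] /(sum_proper_ltn alpha_pos); rewrite /eigval.
  by rewrite neq_ltn => ->.
by rewrite neq_ltn => ->; rewrite orbT.
Qed.

End Distinctness.

Theorem mainTheorem3 (k : nat) (alpha : 'I_k -> nat) :
  (2 <= k)%N -> ~~ odd k -> (forall i, (0 < alpha i)%N) ->
  exists lam : 'I_k -> algC, injective lam /\
    char_poly (QL alpha) = \prod_(i < k) ('X - (lam i)%:P).
Proof.
move=> _ k_even alpha_pos.
pose lam (p : 'I_k) : algC := (eigval alpha p)%:R.
have lam_inj : injective lam.
  by move=> p q /eqP; rewrite eqr_nat => /eqP /(eigval_inj k_even alpha_pos).
exists lam; split => //; apply: char_poly_distinct_roots => // p.
exact: col_eigen_root (eigvec_neq0 alpha_pos p) (QL_eigvec alpha_pos p).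
Qed.
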